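(* Let $m$ be a nonzero non-unit element of a unique factorization domain $D$ with identity $e$. Then $\mathrm{Sep}(J(m))=\{k\in D: \gcd(k,m)\sim e\}$.
   Context: $J(m)=mD$, regarded as an ideal of the multiplicative semigroup $D_{mult}$; $\sim$ is the associate relation. For a subset $A$ of a semigroup $S$ (here $S=D_{mult}$): $\mathrm{Id}\,A=\{x\in S: xA\subseteq A,\ Ax\subseteq A\}$ and $\mathrm{Sep}\,A=\mathrm{Id}\,A\cap\mathrm{Id}(S\setminus A)$. *)

From HB Require Import structures.
From mathcomp Require Import all_boot all_order all_algebra.
Set Implicit Arguments. Unset Strict Implicit. Unset Printing Implicit Defensive.
Import GRing.Theory.
Local Open Scope ring_scope.

Section UFDDefs.
Variable D : idomainType.

Definition dvd (a b : D) : Prop := exists c : D, b = a * c.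
Definition assoc (a b : D) : Prop := dvd a b /\ dvd b a.

Definition irreducible_elt (p : D) : Prop :=
  p != 0 /\ p \isn't a GRing.unit /\
  forall a b : D, p = a * b -> a \is a GRing.unit \/ b \is a GRing.unit.

Definition UFD : Prop :=
  (forall x : D, x != 0 -> x \isn't a GRing.unit ->
     exists s : seq D, (forall p, p \in s -> irreducible_elt p) /\
                       x = \prod_(p <- s) p) /\
  (forall s t : seq D,
     (forall p, p \in s -> irreducible_elt p) ->
     (forall p, p \in t -> irreducible_elt p) ->
     \prod_(p <- s) p = \prod_(p <- t) p ->
     exists t' : seq D, perm_eq t t' /\ size s = size t' /\
       forall i, (i < size s)%N -> assoc (nth 0 s i) (nth 0 t' i)).

Definition is_gcd (d a b : D) : Prop :=
  dvd d a /\ dvd d b /\ forall c, dvd c a -> dvd c b -> dvd c d.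

Definition J (m : D) : D -> Prop := fun y => exists c : D, y = m * c.

Definition IdS (A : D -> Prop) : D -> Prop :=
  fun x => (forall a, A a -> A (x * a)) /\ (forall a, A a -> A (a * x)).

Definition Sep (A : D -> Prop) : D -> Prop :=
  fun x => IdS A x /\ IdS (fun y => ~ A y) x.

End UFDDefs.

(* J(m) is an ideal, so Sep(J(m)) consists of the k for which k a in J(m) forces
   a in J(m).  If k and m share a non-unit divisor c, say m = c c', then k c' lies
   in J(m) while c' does not.  Conversely, if k is coprime to m, every irreducible
   factor of m is prime by unique factorization and does not divide k, so it can be
   cancelled from m | k a one factor at a time. *)
From mathcomp Require Import all_boot all_order all_algebra.
From Stdlib Require Import Classical.
Import GRing.Theory.
Local Open Scope ring_scope.

Section Divisibility.
Set Implicit Arguments.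
Unset Strict Implicit.
Variable D : idomainType.
Implicit Types a b c k m p x y : D.

Definition coprime_elt a b : Prop := forall c, dvd c a -> dvd c b -> dvd c 1.

Lemma dvd_refl x : dvd x x.
Proof. by exists 1; rewrite mulr1. Qed.

Lemma dvd_trans a b c : dvd a b -> dvd b c -> dvd a c.
Proof. by move=> [x ->] [y ->]; exists (x * y); rewrite mulrA. Qed.

Lemma dvd_mull a b : dvd a (b * a).
Proof. by exists b; rewrite mulrC. Qed.

Lemma dvd1_unit x : dvd x 1 -> x \is a GRing.unit.
Proof. by move=> [c Hc]; apply/unitrPr; exists c. Qed.

Lemma dvd_big_mem (s : seq D) p : p \in s -> dvd p (\prod_(q <- s) q).
Proof.
elim: s => [|a s IH] //; rewrite in_cons big_cons => /orP [/eqP -> | /IH].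
  by exists (\prod_(q <- s) q).
by move/dvd_trans; apply; apply: dvd_mull.
Qed.

Lemma gcd_assoc1P a b :
  (exists d, is_gcd d a b /\ assoc d 1) <-> coprime_elt a b.
Proof.
split=> [[d [[_ [_ Hd]] [Hd1 _]]] c Hca Hcb | Hab].
  exact: dvd_trans (Hd c Hca Hcb) Hd1.
exists 1; split; last by split; apply: dvd_refl.
by split; [exists a; rewrite mul1r | split; [exists b; rewrite mul1r | exact: Hab]].
Qed.

Lemma IdS_J m x : IdS (J m) x.
Proof.
by split=> _ [c ->]; [exists (x * c); rewrite mulrCA | exists (c * x); rewrite mulrA].
Qed.

Lemma IdS_notJ_coprime m k : m != 0 -> IdS (fun y => ~ J m y) k -> coprime_elt k m.
Proof.
move=> m0 [_ HkR] c [k' Hk] [c' Hm].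
have [[e He] | HnJ] := classic (J m c'); last first.
  by case: (HkR c' HnJ); exists k'; rewrite Hk Hm mulrAC mulrC.
by exists e; apply: (mulfI m0); rewrite mulr1 {1}Hm He mulrCA.
Qed.

Hypothesis hD : UFD D.

Lemma irreducible_dvd_factor p (u s : seq D) :
  irreducible_elt p -> {in u, forall q, irreducible_elt q} ->
  {in s, forall q, irreducible_elt q} ->
  p * \prod_(q <- u) q = \prod_(q <- s) q -> exists2 q, q \in s & dvd p q.
Proof.
move=> Hp Hu Hs Hpu.
have Hpu_irr : {in p :: u, forall q, irreducible_elt q}.
  by move=> q; rewrite in_cons => /orP [/eqP -> | /Hu].
have Hprod : \prod_(q <- p :: u) q = \prod_(q <- s) q by rewrite big_cons.
have [t' [Hperm [Hsz Has]]] := hD.2 _ _ Hpu_irr Hs Hprod.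
exists (nth 0 t' 0); last by case: (Has 0%N isT).
by rewrite (perm_mem Hperm) mem_nth // -Hsz.
Qed.

Lemma irreducible_prime p a b :
  irreducible_elt p -> dvd p (a * b) -> dvd p a \/ dvd p b.
Proof.
move=> Hp [c Hc]; have [p0 [_ Hp_irr]] := Hp.
have [->|a0] := eqVneq a 0; first by left; exists 0; rewrite mulr0.
have [->|b0] := eqVneq b 0; first by right; exists 0; rewrite mulr0.
have [au|anu] := boolP (a \is a GRing.unit).
  by right; exists (a^-1 * c); rewrite mulrCA -Hc mulKr.
have [bu|bnu] := boolP (b \is a GRing.unit).
  by left; exists (c * b^-1); rewrite mulrA -Hc mulrK.
have c0 : c != 0 by apply: contra_neq (mulf_neq0 a0 b0) => c0; rewrite Hc c0 mulr0.
have [cu|cnu] := boolP (c \is a GRing.unit).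
  have : p = a * (b * c^-1) by rewrite mulrA Hc mulrK.
  by move/Hp_irr; rewrite unitrMl ?unitrV // (negPf anu) (negPf bnu) => -[].
have [sa [Hsa Ha]] := hD.1 a a0 anu.
have [sb [Hsb Hb]] := hD.1 b b0 bnu.
have [u [Hu Hcu]] := hD.1 c c0 cnu.
have Hsab : {in sa ++ sb, forall q, irreducible_elt q}.
  by move=> q; rewrite mem_cat => /orP [/Hsa | /Hsb].
have Hprod : p * \prod_(q <- u) q = \prod_(q <- sa ++ sb) q.
  by rewrite big_cat /= -Ha -Hb -Hcu Hc.
have [q] := irreducible_dvd_factor Hp Hu Hsab Hprod.
rewrite Ha Hb mem_cat => /orP [] /dvd_big_mem Hq Hpq; [left | right]; exact: dvd_trans Hpq Hq.
Qed.

Lemma prod_irreducible_dvd_cancel (s : seq D) k y :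
  {in s, forall p, irreducible_elt p} -> {in s, forall p, ~ dvd p k} ->
  dvd (\prod_(q <- s) q) (k * y) -> dvd (\prod_(q <- s) q) y.
Proof.
elim: s y => [|p s IH] y Hirr Hnd; first by rewrite big_nil => _; exists y; rewrite mul1r.
have Hp : irreducible_elt p by apply: Hirr; rewrite mem_head.
rewrite big_cons => -[c Hc].
have : dvd p (k * y) by exists (\prod_(q <- s) q * c); rewrite Hc mulrA.
case/(irreducible_prime Hp) => [Hpk | [y' Hy']]; first by case: (Hnd p (mem_head _ _)).
have p0 : p != 0 by case: Hp.
have [|||e He] := IH y'.
- by move=> q Hq; apply: Hirr; rewrite in_cons Hq orbT.
- by move=> q Hq; apply: Hnd; rewrite in_cons Hq orbT.
- by exists c; apply: (mulfI p0); rewrite mulrCA -Hy' Hc mulrA.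
by exists e; rewrite Hy' He mulrA.
Qed.

Lemma coprime_dvd_cancel m k a :
  m != 0 -> coprime_elt k m -> dvd m (k * a) -> dvd m a.
Proof.
move=> m0 Hkm; have [mu _ | mnu] := boolP (m \is a GRing.unit).
  by exists (m^-1 * a); rewrite mulVKr.
have [s [Hs Hm]] := hD.1 m m0 mnu.
rewrite Hm; apply: prod_irreducible_dvd_cancel => // p Hps Hpk.
have [_ [Hpu _]] := Hs p Hps.
by case/negP: Hpu; apply/dvd1_unit/(Hkm p Hpk); rewrite Hm; apply: dvd_big_mem.
Qed.

Lemma coprime_IdS_notJ m k : m != 0 -> coprime_elt k m -> IdS (fun y => ~ J m y) k.
Proof.
move=> m0 Hkm; split=> a HnJ HJ; apply/HnJ/(coprime_dvd_cancel m0 Hkm).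
  exact: HJ.
by rewrite mulrC; exact: HJ.
Qed.

End Divisibility.

Theorem corollary1 (D : idomainType) (hD : UFD D) (m : D)
  (hm0 : m != 0) (hmu : m \isn't a GRing.unit) :
  forall k : D, Sep (J m) k <-> exists d : D, is_gcd d k m /\ assoc d 1.
Proof.
move=> k; rewrite gcd_assoc1P; split.
  by move=> [_ HnJ]; apply: IdS_notJ_coprime.
by move=> Hkm; split; [apply: IdS_J | apply: coprime_IdS_notJ].
Qed.
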